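(* Assume $\mathfrak{r}=2^{\aleph_0}$. Then there is a uniform matroid $U$ on the ground set $\mathbb{N}$ such that the matroid family $(U,U)$ consisting of two copies of $U$ admits a packing and a covering, but does not admit a partitioning.
   Context: Matroids here are possibly infinite: a matroid is a pair $(E,\mathcal{I})$ with $\mathcal{I}\subseteq\mathcal{P}(E)$ such that (1) $\emptyset\in\mathcal{I}$; (2) $\mathcal{I}$ is closed under subsets; (3) for all $I,B\in\mathcal{I}$ with $B$ maximal in $\mathcal{I}$ and $I$ not maximal, there is $x\in B\setminus I$ with $I\cup\{x\}\in\mathcal{I}$; (4) for every $X\subseteq E$, every $I\in\mathcal{I}$ with $I\subseteq X$ extends to a maximal element of $\mathcal{I}\cap\mathcal{P}(X)$. Bases are maximal independent sets; circuits minimal dependent sets. A set $X$ spans $e$ if $e\in X$ or there is a circuit $C\ni e$ with $C\setminus\{e\}\subseteq X$; $S$ is spanning if it spans every element of $E$. A matroid is uniform if whenever $I$ is independent, $e\in I$ and $f\in E\setminus I$, then $(I\setminus\{e\})\cup\{f\}$ is independent. For a family $(M_i\colon i\in K)$ of matroids on $E$: a covering is a family $(R_i\colon i\in K)$ with $R_i$ independent in $M_i$ and $\bigcup_i R_i=E$; a packing is a family $(P_i\colon i\in K)$ of pairwise disjoint sets with $P_i$ spanning in $M_i$; a partitioning is a family $(B_i\colon i\in K)$ partitioning $E$ with each $B_i$ a base of $M_i$. The reaping number $\mathfrak{r}$ is the least cardinal such that there is a family $(A_i\colon i<\mathfrak{r})$ of infinite subsets of $\mathbb{N}$ for which no bipartition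 of $\mathbb{N}$ splits every $A_i$ into two infinite pieces. *)

From Stdlib Require Import Classical List.

Definition pset (E : Type) := E -> Prop.

Section Sets.
Context {E : Type}.
Definition subset (A B : pset E) : Prop := forall x, A x -> B x.
Definition empty : pset E := fun _ => False.
Definition union (A B : pset E) : pset E := fun x => A x \/ B x.
Definition setD (A B : pset E) : pset E := fun x => A x /\ ~ B x.
Definition single (e : E) : pset E := fun x => x = e.
Definition infinite (A : pset E) : Prop :=
  ~ exists l : list E, forall x, A x -> List.In x l.
End Sets.

Section Matroid.
Context {E : Type}.

Definition maximal (F : pset (pset E)) (B : pset E) : Prop :=
  F B /\ forall B', F B' -> subset B B' -> subset B' B.

Definition is_matroid (Ind : pset (pset E)) : Prop :=
  Ind empty /\
  (forall A B, Ind B -> subset A B -> Ind A) /\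
  (forall I B, Ind I -> maximal Ind B -> ~ maximal Ind I ->
     exists x, B x /\ ~ I x /\ Ind (union I (single x))) /\
  (forall X I, Ind I -> subset I X ->
     exists B, subset I B /\ maximal (fun Y => Ind Y /\ subset Y X) B).

Definition is_base (Ind : pset (pset E)) (B : pset E) : Prop := maximal Ind B.

Definition is_circuit (Ind : pset (pset E)) (C : pset E) : Prop :=
  ~ Ind C /\ forall D, ~ Ind D -> subset D C -> subset C D.

Definition spans (Ind : pset (pset E)) (X : pset E) (e : E) : Prop :=
  X e \/ exists C, is_circuit Ind C /\ C e /\ subset (setD C (single e)) X.

Definition spanning (Ind : pset (pset E)) (S : pset E) : Prop :=
  forall e, spans Ind S e.

Definition uniform (Ind : pset (pset E)) : Prop :=
  forall I e f, Ind I -> I e -> ~ I f ->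
    Ind (union (setD I (single e)) (single f)).

Definition has_covering {K : Type} (M : K -> pset (pset E)) : Prop :=
  exists R : K -> pset E, (forall i, M i (R i)) /\ (forall x, exists i, R i x).

Definition has_packing {K : Type} (M : K -> pset (pset E)) : Prop :=
  exists P : K -> pset E,
    (forall i j x, i <> j -> P i x -> P j x -> False) /\
    (forall i, spanning (M i) (P i)).

Definition has_partitioning {K : Type} (M : K -> pset (pset E)) : Prop :=
  exists B : K -> pset E,
    (forall i j x, i <> j -> B i x -> B j x -> False) /\
    (forall x, exists i, B i x) /\
    (forall i, is_base (M i) (B i)).
End Matroid.

Definition injective {A B : Type} (f : A -> B) : Prop :=
  forall x y, f x = f y -> x = y.
Definition bijective {A B : Type} (f : A -> B) : Prop :=
  injective f /\ forall y, exists x, f x = y.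

Definition card_le (A B : Type) : Prop := exists f : A -> B, injective f.
Definition card_eq (A B : Type) : Prop := exists f : A -> B, bijective f.

Definition splits (X A : pset nat) : Prop :=
  infinite (fun n => A n /\ X n) /\ infinite (fun n => A n /\ ~ X n).

Definition unsplit_family {I : Type} (A : I -> pset nat) : Prop :=
  (forall i, infinite (A i)) /\ ~ exists X : pset nat, forall i, splits X (A i).

(* r = 2^aleph0 : the least cardinality of an unsplit family equals |P(N)|,
   i.e. some unsplit family is indexed by a set of size |P(N)|, and every
   index set of an unsplit family has size >= |P(N)|. *)
Definition reaping_eq_continuum : Prop :=
  (exists (I : Type) (A : I -> pset nat), card_eq I (pset nat) /\ unsplit_family A) /\
  (forall (I : Type) (A : I -> pset nat), unsplit_family A -> card_le (pset nat) I).

(* Call a family F of subsets of N compatible if no member is almost contained (that is,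
   up to a finite set) in another and no two members are almost complementary.  Declaring
   the bases to be the sets obtained from a member of F by exchanging n elements for n
   others, the subsets of bases form a uniform matroid provided F saturates every pair
   I <= X: some member lies almost between I and X, lies almost strictly above X, or lies
   almost strictly below I.  Two disjoint members give a packing, two members covering N give
   a covering, and a partition of N into two bases would make the two underlying members
   almost complementary.

   Such an F is built by a recursion along a well-order of P(N) in which every initial
   segment is smaller than the continuum, handling every pair I <= X at some stage.  At a
   stage fewer than 2^aleph0 members exist, so by r = 2^aleph0 one set S splits every
   infinite (X \ I) n M and (X \ I) \ M with M an earlier member, and then I u (S n (X \ I))
   is compatible with every earlier member, unless X \ I is finite and I is almost the
   complement of a member M.  To exclude this, the recursion keeps every member M witnessed:
   some member lies almost strictly below or above N \ M, and such a member saturates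
   I <= X.  Witnessing a new member may require adding a second one inside its complement. *)

From Stdlib Require Import Classical ClassicalEpsilon FunctionalExtensionality.
From Stdlib Require Import List Arith Lia Wf_nat.
From mathcomp Require ssrbool boolp wochoice.
Import ListNotations.
Import (canonicals) boolp.

(** * Almost inclusion *)

Definition finite (A : pset nat) : Prop := exists l : list nat, forall x, A x -> In x l.

Lemma finite_subset (A B : pset nat) : subset A B -> finite B -> finite A.
Proof. intros HAB [l Hl]. exists l. auto. Qed.

Lemma finite_cover (A B C : pset nat) :
  subset A (union B C) -> finite B -> finite C -> finite A.
Proof.
  intros H [l1 H1] [l2 H2]. exists (l1 ++ l2). intros x Ax.
  apply in_or_app. destruct (H x Ax); auto.
Qed.

Lemma infinite_subset (A B : pset nat) : subset A B -> infinite A -> infinite B.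
Proof. intros HAB HA HB. exact (HA (finite_subset A B HAB HB)). Qed.

Lemma residue_class_infinite (m r : nat) (A : pset nat) :
  r < m -> (forall n, n mod m = r -> A n) -> infinite A.
Proof.
  intros Hr HA [l Hl].
  set (n := r + S (list_max l) * m).
  assert (Hn : n mod m = r).
  { unfold n. rewrite Nat.Div0.mod_add. apply Nat.mod_small. exact Hr. }
  pose proof (proj1 (list_max_le l (list_max l)) (le_n _)) as Hmax.
  rewrite Forall_forall in Hmax.
  specialize (Hmax n (Hl n (HA n Hn))). unfold n in Hmax. nia.
Qed.

Lemma nat_infinite : infinite (fun _ : nat => True).
Proof. apply (residue_class_infinite 1 0); auto. Qed.

Definition compl (A : pset nat) : pset nat := fun x => ~ A x.

Definition almost_sub (A B : pset nat) : Prop := finite (setD A B).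

Definition strictly_almost_sub (A B : pset nat) : Prop :=
  almost_sub A B /\ ~ almost_sub B A.

Definition incomparable (A B : pset nat) : Prop :=
  ~ almost_sub A B /\ ~ almost_sub B A.

Definition almost_complementary (A B : pset nat) : Prop :=
  finite (fun x => A x /\ B x) /\ finite (fun x => ~ A x /\ ~ B x).

Definition compatible (A B : pset nat) : Prop :=
  (A = B \/ incomparable A B) /\ ~ almost_complementary A B.

Lemma subset_almost_sub (A B : pset nat) : subset A B -> almost_sub A B.
Proof. intros H. exists nil. intros x [Ax nBx]. exact (nBx (H x Ax)). Qed.

Lemma finite_almost_sub (A B : pset nat) : finite A -> almost_sub A B.
Proof. apply finite_subset. intros x [Ax _]. exact Ax. Qed.

Lemma almost_sub_trans (A B C : pset nat) : almost_sub A B -> almost_sub B C -> almost_sub A C.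
Proof.
  apply finite_cover. intros x [Ax nCx].
  destruct (classic (B x)); [right | left]; split; assumption.
Qed.

Lemma compatible_sym (A B : pset nat) : compatible A B -> compatible B A.
Proof.
  intros [[-> | [H1 H2]] Hc]; split; [now left | | right; now split |].
  all: intros [H3 H4]; apply Hc; split;
    [revert H3 | revert H4]; apply finite_subset; intros x; tauto.
Qed.

Lemma compatible_refl (A : pset nat) : compatible A A.
Proof.
  split; [now left |]. intros [H1 H2]. apply nat_infinite.
  apply (finite_cover _ _ _ (fun x _ => classic (A x)));
    [revert H1 | revert H2]; apply finite_subset; intros x; tauto.
Qed.

Lemma compatible_almost_sub (A B : pset nat) : compatible A B -> almost_sub A B -> A = B.
Proof. intros [[E | [H _]] _] HAB; [exact E | contradiction]. Qed.

Lemma disjoint_pair_witnessing (A B : pset nat) :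
  subset B (compl A) -> infinite A -> infinite B -> infinite (setD (compl A) B) ->
  incomparable A B /\ ~ almost_complementary A B /\
  strictly_almost_sub B (compl A) /\ strictly_almost_sub A (compl B).
Proof.
  intros HBA HA HB Hrest. split; [split | split; [| split; split]].
  - refine (infinite_subset _ _ _ HA).
    intros x Ax. split; [exact Ax | intros Bx; exact (HBA x Bx Ax)].
  - refine (infinite_subset _ _ _ HB). intros x Bx. split; [exact Bx | exact (HBA x Bx)].
  - intros [_ Hc]. apply Hrest. revert Hc. apply finite_subset.
    intros x [nAx nBx]. split; assumption.
  - apply subset_almost_sub, HBA.
  - exact Hrest.
  - apply subset_almost_sub. intros x Ax Bx. exact (HBA x Bx Ax).
  - refine (infinite_subset _ _ _ Hrest). intros x [nAx nBx]. split; assumption.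
Qed.

Definition witnessed (Fam : pset (pset nat)) (A : pset nat) : Prop :=
  exists W, Fam W /\
    (strictly_almost_sub W (compl A) \/ strictly_almost_sub (compl A) W).

Definition saturates (Fam : pset (pset nat)) (I X : pset nat) : Prop :=
  (exists M, Fam M /\ almost_sub I M /\ almost_sub M X) \/
  (exists M, Fam M /\ strictly_almost_sub X M) \/
  (exists M, Fam M /\ strictly_almost_sub M I).

Lemma witnessed_mono (Fam Fam' : pset (pset nat)) (A : pset nat) :
  subset Fam Fam' -> witnessed Fam A -> witnessed Fam' A.
Proof. intros H (W & HW & HA). exists W. auto. Qed.

Lemma saturates_mono (Fam Fam' : pset (pset nat)) (I X : pset nat) :
  subset Fam Fam' -> saturates Fam I X -> saturates Fam' I X.
Proof.
  intros H [(M & HM & HI) | [(M & HM & HX) | (M & HM & HI)]];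
    [left | right; left | right; right]; exists M; auto.
Qed.

(** * The seeds *)

Definition residues (l : list nat) : pset nat := fun n => In (n mod 6) l.

Definition packing_part (b : bool) : pset nat := residues (if b then [0; 1] else [2; 3]).
Definition covering_part (b : bool) : pset nat :=
  residues (if b then [0; 2; 4; 5] else [1; 3; 4; 5]).

Definition seed (Z : pset nat) : Prop := exists b, Z = packing_part b \/ Z = covering_part b.

Lemma packing_parts_disjoint x : packing_part true x -> packing_part false x -> False.
Proof. unfold packing_part, residues. cbn [In]. lia. Qed.

Lemma covering_parts_cover x : covering_part true x \/ covering_part false x.
Proof.
  unfold covering_part, residues. cbn [In].
  pose proof (Nat.mod_upper_bound x 6 ltac:(lia)). lia.
Qed.

Ltac residue_class_tac :=
  let attempt r :=
    solve [apply (residue_class_infinite 6 r);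
           [lia | intros n Hn; unfold setD, compl, residues; rewrite Hn; simpl; lia]] in
  first [attempt 0 | attempt 1 | attempt 2 | attempt 3 | attempt 4 | attempt 5].

Lemma seed_compatible (A B : pset nat) : seed A -> seed B -> compatible A B.
Proof.
  intros ([] & [-> | ->]) ([] & [-> | ->]); unfold packing_part, covering_part;
    (split;
      [ first [left; reflexivity | right; split; residue_class_tac]
      | intros [H1 H2]; first [revert H1; residue_class_tac | revert H2; residue_class_tac] ]).
Qed.

Lemma seed_witnessed (A : pset nat) : seed A -> witnessed seed A.
Proof.
  intros ([] & [-> | ->]).
  - exists (packing_part false). split; [exists false; now left | left; split].
    + apply subset_almost_sub. intros x Hx Hx'. exact (packing_parts_disjoint x Hx' Hx).
    + unfold packing_part. residue_class_tac.
  - exists (covering_part false). split; [exists false; now right | right; split].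
    + apply subset_almost_sub. intros x Hx. unfold compl in Hx.
      destruct (covering_parts_cover x); tauto.
    + unfold covering_part. residue_class_tac.
  - exists (packing_part true). split; [exists true; now left | left; split].
    + apply subset_almost_sub. intros x Hx Hx'. exact (packing_parts_disjoint x Hx Hx').
    + unfold packing_part. residue_class_tac.
  - exists (covering_part true). split; [exists true; now right | right; split].
    + apply subset_almost_sub. intros x Hx. unfold compl in Hx.
      destruct (covering_parts_cover x); tauto.
    + unfold covering_part. residue_class_tac.
Qed.

(** * The matroid of a compatible family *)

Lemma NoDup_remove_elem (l : list nat) (x : nat) : NoDup l -> In x l ->
  exists l', NoDup l' /\ length l = S (length l') /\ forall y, In y l' <-> In y l /\ y <> x.
Proof.
  intros Hl Hx. destruct (in_split x l Hx) as (l1 & l2 & ->).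
  pose proof (NoDup_remove_2 _ _ _ Hl) as Hnx. rewrite in_app_iff in Hnx.
  exists (l1 ++ l2). split; [exact (NoDup_remove_1 _ _ _ Hl) | split].
  - rewrite !length_app. simpl. lia.
  - intros y. rewrite !in_app_iff. simpl. split.
    + intros Hy. split; [tauto | intros ->; tauto].
    + intros [[H | [H | H]] Hne]; auto. congruence.
Qed.

Definition swap (B : pset nat) (e f : nat) : pset nat := union (setD B (single e)) (single f).

Definition exchange (M : pset nat) (lf lg : list nat) (B : pset nat) : Prop :=
  NoDup lf /\ NoDup lg /\ (forall x, In x lf -> M x) /\ (forall x, In x lg -> ~ M x) /\
  (forall x, B x <-> (M x /\ ~ In x lf) \/ In x lg).

Lemma exchange_remove M lf lg B e : exchange M lf lg B -> B e ->
  exists lf' lg', exchange M lf' lg' (setD B (single e)) /\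
    length lf' + length lg = S (length lf + length lg').
Proof.
  intros (Hlf & Hlg & HfM & HgM & HB) Be. unfold setD, single.
  destruct (classic (In e lg)) as [eg | neg].
  - destruct (NoDup_remove_elem lg e Hlg eg) as (lg' & Hlg' & Hlen & Hin).
    exists lf, lg'. split; [| lia]. refine (conj Hlf (conj Hlg' (conj HfM (conj _ _)))).
    + intros x Hx. apply HgM, Hin, Hx.
    + intros x. specialize (HB x). specialize (Hin x). specialize (HgM x).
      destruct (Nat.eq_dec x e) as [-> | ne]; tauto.
  - assert (Me : M e /\ ~ In e lf) by (apply HB in Be; tauto).
    exists (e :: lf), lg. split; [| simpl; lia]. refine (conj _ (conj Hlg (conj _ (conj HgM _)))).
    + constructor; tauto.
    + intros x [<- | Hx]; [tauto | auto].
    + intros x. specialize (HB x). simpl.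
      destruct (Nat.eq_dec x e) as [-> | ne]; [| assert (e <> x) by congruence]; tauto.
Qed.

Lemma exchange_add M lf lg B f : exchange M lf lg B -> ~ B f ->
  exists lf' lg', exchange M lf' lg' (union B (single f)) /\
    S (length lf' + length lg) = length lf + length lg'.
Proof.
  intros (Hlf & Hlg & HfM & HgM & HB) nBf. unfold union, single.
  destruct (classic (In f lf)) as [fl | nfl].
  - destruct (NoDup_remove_elem lf f Hlf fl) as (lf' & Hlf' & Hlen & Hin).
    exists lf', lg. split; [| lia]. refine (conj Hlf' (conj Hlg (conj _ (conj HgM _)))).
    + intros x Hx. apply HfM, Hin, Hx.
    + intros x. specialize (HB x). specialize (Hin x). specialize (HfM x).
      destruct (Nat.eq_dec x f) as [-> | ne]; tauto.
  - assert (Mf : ~ M f /\ ~ In f lg) by (rewrite HB in nBf; tauto).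
    exists lf, (f :: lg). split; [| simpl; lia]. refine (conj Hlf (conj _ (conj HfM (conj _ _)))).
    + constructor; tauto.
    + intros x [<- | Hx]; [tauto | auto].
    + intros x. specialize (HB x). simpl.
      destruct (Nat.eq_dec x f) as [-> | ne]; [| assert (f <> x) by congruence]; tauto.
Qed.

Lemma exchange_almost_eq M lf lg B : exchange M lf lg B -> almost_sub B M /\ almost_sub M B.
Proof.
  intros (_ & _ & _ & _ & HB). split.
  - exists lg. intros x [Bx nMx]. apply HB in Bx. tauto.
  - exists lf. intros x [Mx nBx]. apply NNPP. intros nx. apply nBx, HB. tauto.
Qed.

Definition discrepancy (I X B : pset nat) : pset nat := union (setD I B) (setD B X).

Lemma discrepancy_swap_in I X B l w x : subset I X -> I x -> ~ I w ->
  (forall z, discrepancy I X B z -> In z l) ->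
  forall z, discrepancy I X (swap B w x) z -> In z (remove Nat.eq_dec x l).
Proof.
  intros HIX Ix nIw Hl z Hz. unfold discrepancy, swap, union, setD, single in *.
  apply in_in_remove.
  - intros E. subst z. destruct Hz as [[_ Hs] | [_ nXx]]; [tauto | exact (nXx (HIX x Ix))].
  - apply Hl. destruct Hz as [[Iz Hs] | [[[Bz _] | E] nXz]].
    + left. split; [exact Iz |]. intros Bz. apply Hs. left. split; [exact Bz |].
      intros E. subst z. contradiction.
    + right. split; assumption.
    + subst z. exfalso. exact (nXz (HIX x Ix)).
Qed.

Lemma discrepancy_swap_out I X B l y z : subset I X -> subset I B -> ~ X y -> X z ->
  (forall t, discrepancy I X B t -> In t l) ->
  forall t, discrepancy I X (swap B y z) t -> In t (remove Nat.eq_dec y l).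
Proof.
  intros HIX HIB nXy Xz Hl t Ht. unfold discrepancy, swap, union, setD, single in *.
  apply in_in_remove.
  - intros E. subst t. destruct Ht as [[Iy _] | [[[_ ne] | E] _]].
    + exact (nXy (HIX y Iy)).
    + exact (ne eq_refl).
    + subst z. exact (nXy Xz).
  - apply Hl. destruct Ht as [[It Hs] | [[[Bt _] | E] nXt]].
    + exfalso. apply Hs. left. split; [exact (HIB t It) |].
      intros E. subst t. exact (nXy (HIX y It)).
    + right. split; assumption.
    + subst t. contradiction.
Qed.

Section FamilyMatroid.

Variable F : pset (pset nat).

Definition base (B : pset nat) : Prop :=
  exists M lf lg, F M /\ exchange M lf lg B /\ length lf = length lg.

Definition indep (I : pset nat) : Prop := exists B, base B /\ subset I B.

Lemma base_of_member M : F M -> base M.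
Proof.
  intros FM. exists M, nil, nil. split; [exact FM | split; [| reflexivity]].
  refine (conj (NoDup_nil _) (conj (NoDup_nil _) (conj _ (conj _ _)))); simpl; tauto.
Qed.

Lemma base_ext B B' : base B -> subset B B' -> subset B' B -> base B'.
Proof.
  intros (M & lf & lg & FM & (Hlf & Hlg & HfM & HgM & HB) & Hlen) H1 H2.
  exists M, lf, lg. split; [exact FM | split; [| exact Hlen]].
  refine (conj Hlf (conj Hlg (conj HfM (conj HgM _)))).
  intros x. rewrite <- HB. split; auto.
Qed.

Lemma base_swap B e f : base B -> B e -> ~ B f -> base (swap B e f).
Proof.
  intros (M & lf & lg & FM & HB & Hlen) Be nBf.
  destruct (exchange_remove _ _ _ _ e HB Be) as (lf1 & lg1 & H1 & Hlen1).
  assert (nf : ~ setD B (single e) f) by (intros [Bf _]; exact (nBf Bf)).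
  destruct (exchange_add _ _ _ _ f H1 nf) as (lf2 & lg2 & H2 & Hlen2).
  exists M, lf2, lg2. split; [exact FM | split; [exact H2 | lia]].
Qed.

Lemma base_indep B : base B -> indep B.
Proof. intros HB. exists B. split; [exact HB | intros x Bx; exact Bx]. Qed.

Lemma indep_subset A B : indep B -> subset A B -> indep A.
Proof. intros (B1 & HB1 & H) HAB. exists B1. split; [exact HB1 | intros x Ax; auto]. Qed.

Hypothesis F_antichain : forall A B, F A -> F B -> almost_sub A B -> A = B.

Lemma member_almost_sub_base M B : F M -> base B -> almost_sub M B -> almost_sub B M.
Proof.
  intros FM (M' & lf & lg & FM' & HB & _) HMB.
  destruct (exchange_almost_eq _ _ _ _ HB) as [HBM' HM'B].
  rewrite (F_antichain M M' FM FM' (almost_sub_trans _ _ _ HMB HBM')). exact HBM'.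
Qed.

Lemma base_almost_sub_member B M : base B -> F M -> almost_sub B M -> almost_sub M B.
Proof.
  intros (M' & lf & lg & FM' & HB & _) FM HBM.
  destruct (exchange_almost_eq _ _ _ _ HB) as [HBM' HM'B].
  rewrite <- (F_antichain M' M FM' FM (almost_sub_trans _ _ _ HM'B HBM)). exact HM'B.
Qed.

Lemma base_subset_base B1 B2 : base B1 -> base B2 -> subset B1 B2 -> subset B2 B1.
Proof.
  intros (M1 & lf1 & lg1 & FM1 & H1 & E1) (M2 & lf2 & lg2 & FM2 & H2 & E2) Hsub.
  assert (M1 = M2) as <-.
  { apply F_antichain; auto.
    apply (almost_sub_trans _ B1); [apply (exchange_almost_eq _ _ _ _ H1) |].
    apply (almost_sub_trans _ B2); [apply subset_almost_sub, Hsub |].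
    apply (exchange_almost_eq _ _ _ _ H2). }
  destruct H1 as (Nf1 & Ng1 & HfM1 & HgM1 & HB1), H2 as (Nf2 & Ng2 & HfM2 & HgM2 & HB2).
  assert (Hg : incl lg1 lg2).
  { intros x Hx. pose proof (HgM1 x Hx).
    assert (B2 x) as Bx by (apply Hsub, HB1; tauto). apply HB2 in Bx. tauto. }
  assert (Hf : incl lf2 lf1).
  { intros x Hx. apply NNPP. intros nx. pose proof (HfM2 x Hx). pose proof (HgM2 x).
    assert (B2 x) as Bx by (apply Hsub, HB1; tauto). apply HB2 in Bx. tauto. }
  pose proof (NoDup_incl_length Ng1 Hg). pose proof (NoDup_incl_length Nf2 Hf).
  assert (Hg' : incl lg2 lg1) by (apply NoDup_length_incl; auto; lia).
  assert (Hf' : incl lf1 lf2) by (apply NoDup_length_incl; auto; lia).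
  intros x Bx. apply HB2 in Bx. apply HB1. specialize (Hf' x). specialize (Hg' x). tauto.
Qed.

Lemma maximal_indep_iff_base B : maximal indep B <-> base B.
Proof.
  split.
  - intros [(B1 & HB1 & HBB1) Hmax]. apply (base_ext B1 B HB1); auto.
    apply Hmax; [apply base_indep, HB1 | exact HBB1].
  - intros HB. split; [apply base_indep, HB |].
    intros B' (B1 & HB1 & HB'B1) HBB'. intros x Bx.
    apply (base_subset_base B B1 HB HB1); auto.
    intros y By. apply HB'B1, HBB', By.
Qed.

Lemma indep_augment I B : indep I -> maximal indep B -> ~ maximal indep I ->
  exists x, B x /\ ~ I x /\ indep (union I (single x)).
Proof.
  rewrite !maximal_indep_iff_base. intros (B1 & HB1 & HIB1) HB nI.
  assert (exists y, B1 y /\ ~ I y) as (y & B1y & nIy).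
  { apply NNPP. intros Hn. apply nI, (base_ext B1 I HB1); auto.
    intros z Bz. apply NNPP. intros nIz. apply Hn. eauto. }
  assert (exists x, B x /\ ~ I x) as (x & Bx & nIx).
  { apply NNPP. intros Hn.
    assert (BI : subset B I) by (intros z Bz; apply NNPP; intros nIz; apply Hn; eauto).
    apply nIy, BI, (base_subset_base B B1 HB HB1); auto.
    intros z Bz. apply HIB1, BI, Bz. }
  exists x. split; [exact Bx | split; [exact nIx |]].
  destruct (classic (B1 x)) as [B1x | nB1x].
  - exists B1. split; [exact HB1 |]. intros z [Iz | ->]; auto.
  - exists (swap B1 y x). split; [apply base_swap; auto |].
    intros z [Iz | ->]; [left; split; [auto | intros ->; contradiction] | right; reflexivity].
Qed.

Lemma indep_uniform : uniform indep.
Proof.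
  intros I e f (B & HB & HIB) Ie nIf.
  destruct (classic (B f)) as [Bf | nBf].
  - exists B. split; [exact HB |]. intros x [[Ix _] | ->]; auto.
  - exists (swap B e f). split; [apply base_swap; auto |].
    intros x [[Ix nxe] | xf]; [left; split; auto | right; exact xf].
Qed.

Lemma base_spanning B : base B -> spanning indep B.
Proof.
  intros HB e. destruct (classic (B e)) as [Be | nBe]; [left; exact Be | right].
  exists (union B (single e)). split; [split | split; [right; reflexivity |]].
  - intros (B1 & HB1 & Hs). apply nBe, (base_subset_base B B1 HB HB1).
    + intros x Bx. apply Hs. left. exact Bx.
    + apply Hs. right. reflexivity.
  - intros D nD DC c Cc. apply NNPP. intros nDc. apply nD.
    destruct Cc as [Bc | ->].
    + exists (swap B c e). split; [apply base_swap; auto |].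
      intros x Dx. destruct (DC x Dx) as [Bx | xe]; [left; split; auto | right; exact xe].
      intros ->. contradiction.
    + exists B. split; [exact HB |].
      intros x Dx. destruct (DC x Dx) as [Bx | ->]; [exact Bx | contradiction].
  - intros x [[Bx | xe] nxe]; [exact Bx | contradiction].
Qed.

Lemma indep_has_packing (K : Type) (A : K -> pset nat) :
  (forall i, F (A i)) -> (forall i j x, i <> j -> A i x -> A j x -> False) ->
  has_packing (fun _ : K => indep).
Proof.
  intros FA Hdisj. exists A. split; [exact Hdisj |].
  intros i. apply base_spanning, base_of_member, FA.
Qed.

Lemma indep_has_covering (K : Type) (A : K -> pset nat) :
  (forall i, F (A i)) -> (forall x, exists i, A i x) -> has_covering (fun _ : K => indep).
Proof.
  intros FA Hcov. exists A. split; [| exact Hcov].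
  intros i. apply base_indep, base_of_member, FA.
Qed.

Definition has_maximal_extension (I X : pset nat) : Prop :=
  exists B, subset I B /\ maximal (fun Y => indep Y /\ subset Y X) B.

Lemma base_maximal_extension I X B :
  base B -> subset I B -> subset B X -> has_maximal_extension I X.
Proof.
  intros HB HIB HBX. exists B. split; [exact HIB |].
  split; [split; [apply base_indep, HB | exact HBX] |].
  intros B' [HB' _] HBB'. apply maximal_indep_iff_base in HB. exact (proj2 HB B' HB' HBB').
Qed.

Lemma indep_maximal_extension I X : indep X -> subset I X -> has_maximal_extension I X.
Proof.
  intros HX HIX. exists X. split; [exact HIX |].
  split; [split; [exact HX | intros x Xx; exact Xx] |]. intros Y [_ HYX] _. exact HYX.
Qed.

(* One swap either brings a missing element of [I] into [B] or removes an element of [B]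
   outside [X]; if neither is possible, [B] lies between [I] and [X], or else [X] is
   contained in [B].  [B] can run out of elements outside [I] only if [I] contains a base. *)
Lemma exchange_step I X B l :
  subset I X -> (forall B', base B' -> subset B' I -> subset I B') -> base B ->
  (forall x, discrepancy I X B x -> In x l) ->
  (subset I B /\ subset B X) \/ indep X \/
  exists B' l', base B' /\ length l' < length l /\ forall x, discrepancy I X B' x -> In x l'.
Proof.
  intros HIX HI HB Hl.
  destruct (classic (exists x, I x /\ ~ B x)) as [(x & Ix & nBx) | HIB].
  - assert (exists w, B w /\ ~ I w) as (w & Bw & nIw).
    { apply NNPP. intros Hn. apply nBx, (HI B HB); [| exact Ix].
      intros z Bz. apply NNPP. intros nIz. apply Hn. eauto. }
    right; right. exists (swap B w x), (remove Nat.eq_dec x l).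
    split; [exact (base_swap B w x HB Bw nBx) |].
    split; [apply remove_length_lt, Hl; left; split; assumption |].
    exact (discrepancy_swap_in I X B l w x HIX Ix nIw Hl).
  - assert (HIB' : subset I B) by (intros z Iz; apply NNPP; intros nBz; apply HIB; eauto).
    destruct (classic (exists y, B y /\ ~ X y)) as [(y & By & nXy) | HBX].
    + destruct (classic (exists z, X z /\ ~ B z)) as [(z & Xz & nBz) | HXB].
      * right; right. exists (swap B y z), (remove Nat.eq_dec y l).
        split; [exact (base_swap B y z HB By nBz) |].
        split; [apply remove_length_lt, Hl; right; split; assumption |].
        exact (discrepancy_swap_out I X B l y z HIX HIB' nXy Xz Hl).
      * right; left. apply (indep_subset X B (base_indep B HB)).
        intros z Xz. apply NNPP. intros nBz. apply HXB. eauto.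
    + left. split; [exact HIB' |].
      intros z Bz. apply NNPP. intros nXz. apply HBX. eauto.
Qed.

Lemma exchange_towards I X :
  subset I X -> (forall B, base B -> subset B I -> subset I B) ->
  forall l B, base B -> (forall x, discrepancy I X B x -> In x l) ->
  has_maximal_extension I X.
Proof.
  intros HIX HI l.
  induction l as [l IH] using (well_founded_ind (well_founded_ltof _ (@length nat))).
  intros B HB Hl.
  destruct (exchange_step I X B l HIX HI HB Hl)
    as [[HIB HBX] | [HX | (B' & l' & HB' & Hlen & Hl')]].
  - exact (base_maximal_extension I X B HB HIB HBX).
  - exact (indep_maximal_extension I X HX HIX).
  - exact (IH l' Hlen B' HB' Hl').
Qed.

Lemma no_base_below_indep I : indep I -> forall B, base B -> subset B I -> subset I B.
Proof.
  intros (B1 & HB1 & HIB1) B HB HBI x Ix.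
  apply (base_subset_base B B1 HB HB1); [intros y By; apply HIB1, HBI, By | apply HIB1, Ix].
Qed.

Lemma indep_below_member X M : F M -> strictly_almost_sub X M -> indep X.
Proof.
  intros FM [[l Hl] HMX].
  assert (HI : forall B, base B -> subset B X -> subset X B).
  { intros B HB HBX. exfalso. apply HMX.
    apply (almost_sub_trans _ B); [| apply subset_almost_sub, HBX].
    apply (base_almost_sub_member B M HB FM).
    apply (almost_sub_trans _ X); [apply subset_almost_sub, HBX | exists l; exact Hl]. }
  destruct (exchange_towards X (fun _ => True) (fun _ _ => Logic.I) HI l M (base_of_member M FM))
    as (B & HXB & [[HB _] _]).
  - intros x [Hx | [_ Hx]]; [exact (Hl x Hx) | contradiction].
  - exact (indep_subset X B HB HXB).
Qed.

Lemma indep_not_above_member I M : indep I -> F M -> ~ strictly_almost_sub M I.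
Proof.
  intros (B & HB & HIB) FM [HMI HIM]. apply HIM.
  apply (almost_sub_trans _ B); [apply subset_almost_sub, HIB |].
  apply (member_almost_sub_base M B FM HB).
  apply (almost_sub_trans _ _ _ HMI), subset_almost_sub, HIB.
Qed.

Hypothesis F_saturates : forall I X, subset I X -> saturates F I X.

Lemma indep_has_maximal_extension I X : indep I -> subset I X -> has_maximal_extension I X.
Proof.
  intros HI HIX.
  destruct (F_saturates I X HIX) as [(M & FM & HIM & HMX) | [(M & FM & HXM) | (M & FM & HMI)]].
  - destruct (finite_cover (union (setD I M) (setD M X)) _ _ (fun x h => h) HIM HMX) as [l Hl].
    exact (exchange_towards I X HIX (no_base_below_indep I HI) l M (base_of_member M FM) Hl).
  - exact (indep_maximal_extension I X (indep_below_member X M FM HXM) HIX).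
  - exfalso. exact (indep_not_above_member I M HI FM HMI).
Qed.

Lemma indep_matroid : is_matroid indep.
Proof.
  split; [| split; [| split]].
  - destruct (F_saturates empty empty (fun _ h => h))
      as [(M & FM & _) | [(M & FM & _) | (M & FM & _)]];
      exists M; (split; [apply base_of_member, FM | intros x []]).
  - intros A B HB HAB. exact (indep_subset A B HB HAB).
  - exact indep_augment.
  - intros X I HI HIX. exact (indep_has_maximal_extension I X HI HIX).
Qed.

Lemma base_almost_eq_member B : base B -> exists M, F M /\ almost_sub B M /\ almost_sub M B.
Proof.
  intros (M & lf & lg & FM & HB & _). exists M. split; [exact FM |].
  exact (exchange_almost_eq _ _ _ _ HB).
Qed.

Hypothesis F_no_complements : forall A B, F A -> F B -> ~ almost_complementary A B.

Lemma indep_no_partitioning : ~ has_partitioning (fun _ : bool => indep).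
Proof.
  intros (B & Hdisj & Hcov & HB).
  destruct (base_almost_eq_member (B true) (proj1 (maximal_indep_iff_base _) (HB true)))
    as (Mt & FMt & Ht1 & Ht2).
  destruct (base_almost_eq_member (B false) (proj1 (maximal_indep_iff_base _) (HB false)))
    as (Mf & FMf & Hf1 & Hf2).
  apply (F_no_complements Mt Mf FMt FMf). split.
  - apply (finite_cover _ (setD Mt (B true)) (setD Mf (B false))); auto.
    intros x [Mtx Mfx]. destruct (classic (B true x)) as [Bt | nBt]; [right | left]; split; auto.
    intros Bf. exact (Hdisj true false x ltac:(discriminate) Bt Bf).
  - apply (finite_cover _ (setD (B true) Mt) (setD (B false) Mf)); auto.
    intros x [nMt nMf]. destruct (Hcov x) as [[] Bx]; [left | right]; split; auto.
Qed.

End FamilyMatroid.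

(** * Sets below the continuum *)

Definition below_continuum (K : Type) : Prop := ~ card_le (pset nat) K.

Lemma below_continuum_card_le (K K' : Type) :
  card_le K' K -> below_continuum K -> below_continuum K'.
Proof. intros [g Hg] HK [f Hf]. apply HK. exists (fun A => g (f A)). intros A B E. auto. Qed.

Definition pset_pair (A B : pset nat) : pset nat :=
  fun n => if Nat.even n then A (Nat.div2 n) else B (Nat.div2 n).

Lemma pset_pair_even A B m : pset_pair A B (2 * m) = A m.
Proof. unfold pset_pair. rewrite Nat.even_even, Nat.div2_double. reflexivity. Qed.

Lemma pset_pair_odd A B m : pset_pair A B (S (2 * m)) = B m.
Proof.
  unfold pset_pair. rewrite Nat.div2_succ_double, <- Nat.add_1_r, Nat.even_odd. reflexivity.
Qed.

Lemma pset_pair_inj A B A' B' : pset_pair A B = pset_pair A' B' -> A = A' /\ B = B'.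
Proof.
  intros E. split; apply functional_extensionality; intros m.
  - rewrite <- (pset_pair_even A B m), <- (pset_pair_even A' B' m), E. reflexivity.
  - rewrite <- (pset_pair_odd A B m), <- (pset_pair_odd A' B' m), E. reflexivity.
Qed.

(* Use P(N) = P(N) x P(N): either every [A] has a [B] with [f (A, B)] on the [true] side, or
   some [A0] has all [f (A0, B)] on the [false] side; either way P(N) injects into [K]. *)
Lemma below_continuum_prod_bool K : below_continuum K -> below_continuum (K * bool).
Proof.
  intros HK [f Hf]. apply HK.
  destruct (classic (forall A, exists B, snd (f (pset_pair A B)) = true)) as [Htrue | Hfalse].
  - destruct (choice _ Htrue) as [h Hh].
    exists (fun A => fst (f (pset_pair A (h A)))). intros A A' E.
    assert (f (pset_pair A (h A)) = f (pset_pair A' (h A'))) as E'.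
    { rewrite (surjective_pairing (f (pset_pair A _))), (surjective_pairing (f (pset_pair A' _))).
      rewrite E, Hh, Hh. reflexivity. }
    exact (proj1 (pset_pair_inj _ _ _ _ (Hf _ _ E'))).
  - apply not_all_ex_not in Hfalse. destruct Hfalse as [A0 HA0].
    assert (Hn : forall B, snd (f (pset_pair A0 B)) = false).
    { intros B. destruct (snd (f (pset_pair A0 B))) eqn:E; [exfalso; eauto | reflexivity]. }
    exists (fun B => fst (f (pset_pair A0 B))). intros B B' E.
    assert (f (pset_pair A0 B) = f (pset_pair A0 B')) as E'.
    { rewrite (surjective_pairing (f (pset_pair A0 B))), (surjective_pairing (f (pset_pair A0 B'))).
      rewrite E, Hn, Hn. reflexivity. }
    exact (proj2 (pset_pair_inj _ _ _ _ (Hf _ _ E'))).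
Qed.

Lemma below_continuum_option K : below_continuum K -> below_continuum (option K).
Proof.
  intros HK. destruct (classic (inhabited K)) as [[k0] | nK].
  - apply (below_continuum_card_le (K * bool)); [| exact (below_continuum_prod_bool K HK)].
    exists (fun o => match o with Some k => (k, true) | None => (k0, false) end).
    intros [a |] [b |] E; congruence.
  - intros [f Hf].
    assert (Hnone : forall A, f A = None).
    { intros A. destruct (f A) as [k |]; [exfalso; exact (nK (inhabits k)) | reflexivity]. }
    assert (E : (fun _ : nat => True) = (fun _ => False))
      by (apply Hf; rewrite !Hnone; reflexivity).
    rewrite <- (f_equal (fun A => A 0) E). exact Logic.I.
Qed.

Lemma below_continuum_image K (c : K -> pset nat) (P : pset (pset nat)) :
  below_continuum K -> (forall Z, P Z -> exists k, c k = Z) -> below_continuum {Z | P Z}.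
Proof.
  intros HK Hc. apply (below_continuum_card_le K); [| exact HK].
  destruct (choice (fun (z : {Z | P Z}) k => c k = proj1_sig z)) as [g Hg].
  { intros [Z HZ]. exact (Hc Z HZ). }
  exists g. intros [Z HZ] [Z' HZ'] E.
  pose proof (Hg (exist _ Z HZ)) as H1. pose proof (Hg (exist _ Z' HZ')) as H2.
  simpl in H1, H2. rewrite E, H2 in H1. subst Z'. f_equal. apply proof_irrelevance.
Qed.

(** * One step of the construction *)

Section Extension.

Hypothesis reaping_large :
  forall (K : Type) (A : K -> pset nat), unsplit_family A -> card_le (pset nat) K.

Lemma split_infinite_members K (A : K -> pset nat) :
  below_continuum K -> exists S, forall k, infinite (A k) -> splits S (A k).
Proof.
  intros HK.
  set (A' k := if excluded_middle_informative (infinite (A k)) then A k else fun _ => True).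
  assert (HA' : forall k, infinite (A' k)).
  { intros k. unfold A'. destruct excluded_middle_informative; [assumption | exact nat_infinite]. }
  destruct (classic (exists S, forall k, splits S (A' k))) as [(S & HS) | nS].
  - exists S. intros k Hk. specialize (HS k). unfold A' in HS.
    destruct excluded_middle_informative; [exact HS | contradiction].
  - exfalso. exact (HK (reaping_large K A' (conj HA' nS))).
Qed.

Variable G : pset (pset nat).
Variables I X : pset nat.
Hypothesis G_small : below_continuum {Z | G Z}.
Hypothesis G_inhabited : exists Z, G Z.
Hypothesis G_witnessed : forall Z, G Z -> witnessed G Z.
Hypothesis I_sub_X : subset I X.
Hypothesis not_saturated : ~ saturates G I X.

Lemma no_member_between M' : G M' -> almost_sub I M' -> ~ almost_sub M' X.
Proof. intros GM' HIM HMX. apply not_saturated. left. eauto. Qed.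

Lemma member_above_X M' : G M' -> almost_sub X M' -> almost_sub M' X.
Proof.
  intros GM' HXM. apply NNPP. intros n. apply not_saturated. right. left.
  exists M'. split; [exact GM' | split; assumption].
Qed.

Lemma member_below_I M' : G M' -> almost_sub M' I -> almost_sub I M'.
Proof.
  intros GM' HMI. apply NNPP. intros n. apply not_saturated. right. right.
  exists M'. split; [exact GM' | split; assumption].
Qed.

Lemma member_infinite M' : G M' -> infinite M'.
Proof.
  intros GM' Hfin. apply (no_member_between M' GM');
    [apply member_below_I; [exact GM' |] |]; apply finite_almost_sub, Hfin.
Qed.

Let D : pset nat := setD X I.

Definition interpolant (S : pset nat) : pset nat := fun n => I n \/ (D n /\ S n).

Lemma interpolant_between S : subset I (interpolant S) /\ subset (interpolant S) X.
Proof. split; [intros x Ix; left; exact Ix | intros x [Ix | [[Xx _] _]]; auto]. Qed.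

Lemma interpolant_not_almost_sub S M' : G M' ->
  (infinite (setD D M') -> splits S (setD D M')) -> ~ almost_sub (interpolant S) M'.
Proof.
  intros GM' Hsplit Hsub. destruct (interpolant_between S) as [HI _].
  assert (HIM : almost_sub I M') by exact (almost_sub_trans _ _ _ (subset_almost_sub _ _ HI) Hsub).
  assert (Hinf : infinite (setD D M')).
  { intros Hfin. apply (no_member_between M' GM' HIM), (member_above_X M' GM').
    apply (finite_cover _ (setD I M') (setD D M')); auto.
    intros x [Xx nMx]. destruct (classic (I x)); [left | right]; repeat split; auto. }
  apply (proj1 (Hsplit Hinf)). revert Hsub. apply finite_subset.
  intros x [[Dx nMx] Sx]. split; [right; split; auto | exact nMx].
Qed.

Lemma member_not_almost_sub_interpolant S M' : G M' ->
  (infinite (fun x => D x /\ M' x) -> splits S (fun x => D x /\ M' x)) ->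
  ~ almost_sub M' (interpolant S).
Proof.
  intros GM' Hsplit Hsub. destruct (interpolant_between S) as [_ HX].
  assert (HMX : almost_sub M' X) by exact (almost_sub_trans _ _ _ Hsub (subset_almost_sub _ _ HX)).
  assert (nHIM : ~ almost_sub I M') by (intros HIM; exact (no_member_between M' GM' HIM HMX)).
  assert (Hinf : infinite (fun x => D x /\ M' x)).
  { intros Hfin. apply nHIM, (member_below_I M' GM').
    apply (finite_cover _ (setD M' X) (fun x => D x /\ M' x)); auto.
    intros x [Mx nIx]. destruct (classic (X x)); [right | left]; repeat split; auto. }
  apply (proj2 (Hsplit Hinf)). revert Hsub. apply finite_subset.
  intros x [[[Xx nIx] Mx] nSx]. split; [exact Mx |]. intros [Ix | [_ Sx]]; contradiction.
Qed.

(* If the gap [X \ I] is finite, every set between [I] and [X] is almost [I]; the witness of a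
   member complementary to it would then saturate the pair. *)
Lemma gap_finite_not_almost_complementary A M' : G M' -> finite D ->
  subset I A -> subset A X -> ~ almost_complementary A M'.
Proof.
  intros GM' HD HIA HAX [HAM HcAM].
  assert (HcMI : almost_sub (compl M') I).
  { apply (almost_sub_trans _ A);
      [| apply (almost_sub_trans _ X); [apply subset_almost_sub, HAX | exact HD]].
    revert HcAM. apply finite_subset. intros x [nMx nAx]. split; assumption. }
  assert (HXcM : almost_sub X (compl M')).
  { apply (almost_sub_trans _ I _ HD), (almost_sub_trans _ A); [apply subset_almost_sub, HIA |].
    revert HAM. apply finite_subset. intros x [Ax nnMx]. split; [exact Ax | apply NNPP, nnMx]. }
  destruct (G_witnessed M' GM') as (W & GW & [[HWc HcW] | [HcW HWc]]);
    apply not_saturated; right; [right | left]; exists W; (split; [exact GW | split]).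
  - exact (almost_sub_trans _ _ _ HWc HcMI).
  - intros HIW. exact (HcW (almost_sub_trans _ _ _ HcMI HIW)).
  - exact (almost_sub_trans _ _ _ HXcM HcW).
  - intros HWX. exact (HWc (almost_sub_trans _ _ _ HWX HXcM)).
Qed.

Lemma interpolant_not_almost_complementary S M' : G M' ->
  (infinite (fun x => D x /\ M' x) -> splits S (fun x => D x /\ M' x)) ->
  (infinite (setD D M') -> splits S (setD D M')) ->
  ~ almost_complementary (interpolant S) M'.
Proof.
  intros GM' Hsplit1 Hsplit2 [Hc1 Hc2].
  destruct (classic (finite (fun x => D x /\ M' x))) as [Hf1 | Hi1].
  - destruct (classic (finite (setD D M'))) as [Hf2 | Hi2].
    + destruct (interpolant_between S) as [HI HX].
      apply (gap_finite_not_almost_complementary (interpolant S) M' GM'); auto.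
      * apply (finite_cover _ (fun x => D x /\ M' x) (setD D M')); [| exact Hf1 | exact Hf2].
        intros x Dx. destruct (classic (M' x)); [left | right]; split; assumption.
      * split; assumption.
    + apply (proj2 (Hsplit2 Hi2)). revert Hc2. apply finite_subset.
      intros x [[Dx nMx] nSx]. split; [| exact nMx].
      intros [Ix | [_ Sx]]; [exact (proj2 Dx Ix) | exact (nSx Sx)].
  - apply (proj1 (Hsplit1 Hi1)). revert Hc1. apply finite_subset.
    intros x [[Dx Mx] Sx]. split; [right; split | ]; assumption.
Qed.

Lemma exists_interpolant : exists M, subset I M /\ subset M X /\
  forall M', G M' -> incomparable M M' /\ ~ almost_complementary M M'.
Proof.
  destruct (split_infinite_members ({Z | G Z} * bool)
              (fun c => if snd c then (fun x => D x /\ proj1_sig (fst c) x)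
                        else setD D (proj1_sig (fst c)))
              (below_continuum_prod_bool _ G_small)) as [S HS].
  exists (interpolant S). destruct (interpolant_between S) as [HI HX].
  split; [exact HI | split; [exact HX |]].
  intros M' GM'.
  pose proof (HS (exist _ M' GM', true)) as H1. pose proof (HS (exist _ M' GM', false)) as H2.
  simpl in H1, H2.
  split; [split |].
  - exact (interpolant_not_almost_sub S M' GM' H2).
  - exact (member_not_almost_sub_interpolant S M' GM' H1).
  - exact (interpolant_not_almost_complementary S M' GM' H1 H2).
Qed.

Lemma partner_free M S M' : G M' ->
  splits S (setD (compl M) M') ->
  (infinite (fun x => M' x /\ compl M x) -> splits S (fun x => M' x /\ compl M x)) ->
  incomparable (fun x => compl M x /\ S x) M' /\
  ~ almost_complementary (fun x => compl M x /\ S x) M'.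
Proof.
  intros GM' [Hin Hout] Hsplit. split; [split |].
  - refine (infinite_subset _ _ _ Hin).
    intros x [[nMx nM'x] Sx]. split; [split |]; assumption.
  - destruct (classic (finite (fun x => M' x /\ compl M x))) as [Hf | Hi].
    + intros Hsub. apply (member_infinite M' GM').
      apply (finite_cover _ (setD M' (fun x => compl M x /\ S x)) (fun x => M' x /\ compl M x));
        auto.
      intros x Mx. destruct (classic (M x)) as [Mx' | nMx]; [left | right]; split; auto.
      intros [nMx _]. contradiction.
    + refine (infinite_subset _ _ _ (proj2 (Hsplit Hi))).
      intros x [[Mx _] nSx]. split; [exact Mx | intros [_ Sx]; exact (nSx Sx)].
  - intros [_ Hc]. apply Hout. revert Hc. apply finite_subset.
    intros x [[nMx nM'x] nSx]. split; [intros [_ Sx]; exact (nSx Sx) | exact nM'x].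
Qed.

(* [M2] is [compl M] cut by a set splitting every [compl M \ M'] and every infinite
   [M' n compl M]. *)
Lemma exists_partner M :
  (forall M', G M' -> incomparable M M' /\ ~ almost_complementary M M') ->
  (forall M', G M' -> ~ almost_sub (compl M) M') ->
  exists M2, (forall M', G M' -> incomparable M2 M' /\ ~ almost_complementary M2 M') /\
    incomparable M M2 /\ ~ almost_complementary M M2 /\
    strictly_almost_sub M2 (compl M) /\ strictly_almost_sub M (compl M2).
Proof.
  intros HM Hlarge. destruct G_inhabited as [Z0 GZ0].
  destruct (split_infinite_members ({Z | G Z} * bool)
              (fun c => if snd c then setD (compl M) (proj1_sig (fst c))
                        else (fun x => proj1_sig (fst c) x /\ compl M x))
              (below_continuum_prod_bool _ G_small)) as [S HS].
  assert (HQ : forall M', G M' -> splits S (setD (compl M) M'))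
    by (intros M' GM'; exact (HS (exist _ M' GM', true) (Hlarge M' GM'))).
  exists (fun x => compl M x /\ S x). split.
  - intros M' GM'. exact (partner_free M S M' GM' (HQ M' GM') (HS (exist _ M' GM', false))).
  - destruct (HQ Z0 GZ0) as [Hin Hout]. apply disjoint_pair_witnessing.
    + intros x [nMx _]. exact nMx.
    + intros Hfin. apply (proj1 (proj1 (HM Z0 GZ0))), finite_almost_sub, Hfin.
    + refine (infinite_subset _ _ _ Hin). intros x [[nMx _] Sx]. split; assumption.
    + refine (infinite_subset _ _ _ Hout).
      intros x [[nMx _] nSx]. split; [exact nMx | intros [_ Sx]; exact (nSx Sx)].
Qed.

Definition admissible (M M2 : pset nat) : Prop :=
  subset I M /\ subset M X /\
  (forall Z, G Z -> compatible M Z /\ compatible M2 Z) /\ compatible M M2 /\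
  witnessed (fun Z => G Z \/ Z = M \/ Z = M2) M /\
  witnessed (fun Z => G Z \/ Z = M \/ Z = M2) M2.

Lemma admissible_exists : exists M M2, admissible M M2.
Proof.
  destruct exists_interpolant as (M & HIM & HMX & HM).
  assert (HMc : forall Z, G Z -> compatible M Z)
    by (intros Z GZ; split; [right |]; apply HM, GZ).
  destruct (classic (exists M', G M' /\ almost_sub (compl M) M')) as [(M' & GM' & HcM) | Hlarge].
  - exists M, M. refine (conj HIM (conj HMX (conj _ (conj (compatible_refl M) (conj ?[w] ?w))))).
    + intros Z GZ. split; apply HMc, GZ.
    + exists M'. split; [left; exact GM' | right; split; [exact HcM |]].
      intros HMcM. apply (proj2 (HM M' GM')). split.
      * revert HMcM. apply finite_subset.
        intros x [Mx M'x]. split; [exact M'x | intros nMx; exact (nMx Mx)].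
      * revert HcM. apply finite_subset. intros x [nMx nM'x]. split; assumption.
  - destruct (exists_partner M HM (fun M' GM' HcM => Hlarge (ex_intro _ M' (conj GM' HcM))))
      as (M2 & HM2 & Hinc & Hnc & HM2M & HMM2).
    exists M, M2.
    refine (conj HIM (conj HMX (conj _ (conj (conj (or_intror Hinc) Hnc) (conj _ _))))).
    + intros Z GZ. split; [apply HMc, GZ | split; [right |]; apply HM2, GZ].
    + exists M2. split; [right; right; reflexivity | left; exact HM2M].
    + exists M. split; [right; left; reflexivity | left; exact HMM2].
Qed.

End Extension.

(** * The transfinite construction *)

Lemma exists_minimizing_order (T : Type) : exists R : T -> T -> Prop,
  forall P : T -> Prop, (exists x, P x) ->
    exists z, (P z /\ forall x, P x -> R z x) /\
      forall z', P z' -> (forall x, P x -> R z' x) -> z' = z.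
Proof.
  destruct (wochoice.well_ordering_principle _
            : {R : ssrbool.rel (boolp.classicType T) | wochoice.well_order R}) as [R HR].
  exists (fun x y => R x y = true). intros P [x Px].
  destruct (HR (fun y => boolp.asbool (P y))) as (z & [Hz Hlb] & Hu).
  { exists x. exact (boolp.asboolT Px). }
  exists z. split; [split; [exact (boolp.asboolW Hz) |] |].
  - intros y Py. exact (Hlb y (boolp.asboolT Py)).
  - intros z' Pz' Hz'. symmetry. apply Hu. split; [exact (boolp.asboolT Pz') |].
    intros y Hy. exact (Hz' y (boolp.asboolW Hy)).
Qed.

Lemma exists_total_well_order (T : Type) : exists R : T -> T -> Prop,
  (forall x y z, R x y -> R y z -> R x z) /\ (forall x y, R x y -> R y x -> x = y) /\
  (forall x y, R x y \/ R y x) /\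
  (forall P : T -> Prop, (exists x, P x) -> exists z, P z /\ forall x, P x -> R z x).
Proof.
  destruct (exists_minimizing_order T) as [R HR].
  assert (Hmin : forall P : T -> Prop, (exists x, P x) -> exists z, P z /\ forall x, P x -> R z x)
    by (intros P HP; destruct (HR P HP) as (z & Hz & _); exists z; exact Hz).
  assert (Hanti : forall x y, R x y -> R y x -> x = y).
  { intros x y Hxy Hyx.
    assert (Hrefl : forall w, R w w)
      by (intros w; destruct (Hmin (fun v => v = w)) as (v & -> & Hv); eauto).
    destruct (HR (fun z => z = x \/ z = y)) as (z & _ & Hu); [eauto |].
    rewrite (Hu x), (Hu y); auto; intros w [-> | ->]; auto. }
  exists R. split; [| split; [exact Hanti | split; [| exact Hmin]]].
  - intros x y z Hxy Hyz.
    destruct (Hmin (fun w => w = x \/ w = y \/ w = z)) as (m & Hm & Hmin'); [eauto |].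
    destruct Hm as [-> | [-> | ->]].
    + exact (Hmin' z (or_intror (or_intror eq_refl))).
    + rewrite (Hanti x y Hxy (Hmin' x (or_introl eq_refl))). exact Hyz.
    + rewrite <- (Hanti y z Hyz (Hmin' y (or_intror (or_introl eq_refl)))). exact Hxy.
  - intros x y. destruct (Hmin (fun z => z = x \/ z = y)) as (z & [-> | ->] & Hz); eauto.
Qed.

Lemma exists_strict_well_order (T : Type) : exists lt : T -> T -> Prop,
  well_founded lt /\ (forall x y z, lt x y -> lt y z -> lt x z) /\
  (forall x y, lt x y \/ x = y \/ lt y x).
Proof.
  destruct (exists_total_well_order T) as (R & Htrans & Hanti & Htotal & Hmin).
  exists (fun x y => R x y /\ x <> y). split; [| split].
  - intros a. apply NNPP. intros Hna.
    destruct (Hmin (fun w => ~ Acc (fun x y => R x y /\ x <> y) w)) as (z & Hz & Hzmin);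
      [eauto |].
    apply Hz. constructor. intros y [Ryz nyz]. apply NNPP. intros Hny.
    exact (nyz (Hanti y z Ryz (Hzmin y Hny))).
  - intros x y z [Rxy nxy] [Ryz nyz]. split; [eauto |].
    intros E. subst z. exact (nxy (Hanti x y Rxy Ryz)).
  - intros x y. destruct (classic (x = y)) as [-> | nxy]; [right; left; reflexivity |].
    destruct (Htotal x y); [left | right; right]; split; auto.
Qed.

Lemma well_founded_minimal (T : Type) (lt : T -> T -> Prop) (P : T -> Prop) :
  well_founded lt -> (exists x, P x) -> exists x, P x /\ forall y, lt y x -> ~ P y.
Proof.
  intros Hwf [x Px]. apply NNPP. intros Hn. revert Px.
  induction x as [x IH] using (well_founded_ind Hwf). intros Px.
  apply Hn. exists x. split; [exact Px |]. intros y Hy Py. exact (IH y Hy Py).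
Qed.

(* With all initial segments below the continuum, [u] itself is an enumeration; otherwise
   the first long initial segment carries an injective copy of [P(N)]. *)
Lemma enumeration_with_small_segments (lt : pset nat -> pset nat -> Prop) (T : Type)
  (u : pset nat -> T) : well_founded lt -> (forall t, exists A, u A = t) ->
  exists g : pset nat -> T, forall t, exists y, below_continuum {k | lt k y} /\ g y = t.
Proof.
  intros Hwf Hu.
  destruct (classic (forall y, below_continuum {k | lt k y})) as [Hall | Hlong].
  - exists u. intros t. destruct (Hu t) as [A HA]. exists A. auto.
  - apply not_all_ex_not in Hlong.
    destruct (well_founded_minimal _ lt _ Hwf Hlong) as (y0 & Hy0 & Hmin).
    apply NNPP in Hy0. destruct Hy0 as [f Hf].
    set (h A := proj1_sig (f A)).
    assert (Hh : forall A A', h A = h A' -> A = A').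
    { intros A A' E. apply Hf. unfold h in E.
      destruct (f A) as [a Ha], (f A') as [a' Ha']. simpl in E. subst a'.
      f_equal. apply proof_irrelevance. }
    exists (fun y => u (epsilon (inhabits empty) (fun A => h A = y))).
    intros t. destruct (Hu t) as [A <-]. exists (h A). split.
    + apply NNPP, Hmin. exact (proj2_sig (f A)).
    + f_equal. apply Hh. apply (epsilon_spec (inhabits empty) (fun A' => h A' = h A)). eauto.
Qed.

Definition pset_unpair (A : pset nat) : pset nat * pset nat :=
  (fun n => A (2 * n), fun n => A (S (2 * n))).

Lemma pset_unpair_onto t : exists A, pset_unpair A = t.
Proof.
  destruct t as [A B]. exists (pset_pair A B). unfold pset_unpair.
  f_equal; apply functional_extensionality; intros n; [apply pset_pair_even | apply pset_pair_odd].
Qed.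

Section Construction.

Hypothesis reaping_large :
  forall (K : Type) (A : K -> pset nat), unsplit_family A -> card_le (pset nat) K.

Variable lt : pset nat -> pset nat -> Prop.
Hypothesis lt_wf : well_founded lt.
Hypothesis lt_trans : forall x y z, lt x y -> lt y z -> lt x z.
Hypothesis lt_trichotomy : forall x y, lt x y \/ x = y \/ lt y x.
Variable task : pset nat -> pset nat * pset nat.

Definition pair_members (o : option (pset nat * pset nat)) (Z : pset nat) : Prop :=
  match o with Some (M, M2) => Z = M \/ Z = M2 | None => False end.

Definition family_before y (f : forall k, lt k y -> option (pset nat * pset nat)) :
  pset (pset nat) := fun Z => seed Z \/ exists k (h : lt k y), pair_members (f k h) Z.

Definition active (G : pset (pset nat)) y : Prop :=
  below_continuum {k | lt k y} /\ subset (fst (task y)) (snd (task y)) /\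
  ~ saturates G (fst (task y)) (snd (task y)).

Definition stage_step y (f : forall k, lt k y -> option (pset nat * pset nat)) :
  option (pset nat * pset nat) :=
  let G := family_before y f in
  if excluded_middle_informative (active G y)
  then Some (epsilon (inhabits (empty, empty))
               (fun p => admissible G (fst (task y)) (snd (task y)) (fst p) (snd p)))
  else None.

Definition stage : pset nat -> option (pset nat * pset nat) :=
  Fix lt_wf (fun _ => option (pset nat * pset nat)) stage_step.

Lemma stage_eq y : stage y = stage_step y (fun k _ => stage k).
Proof.
  apply (Fix_eq lt_wf (fun _ => option (pset nat * pset nat)) stage_step).
  intros x f g Hfg.
  replace g with f; [reflexivity |].
  apply functional_extensionality_dep. intros k. apply functional_extensionality_dep. auto.
Qed.

Definition earlier y : pset (pset nat) := family_before y (fun k _ => stage k).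

Lemma seed_earlier y : subset seed (earlier y).
Proof. intros Z HZ. left. exact HZ. Qed.

Lemma stage_earlier k y Z : lt k y -> pair_members (stage k) Z -> earlier y Z.
Proof. intros Hky HZ. right. exists k, Hky. exact HZ. Qed.

Lemma earlier_mono k y : lt k y -> subset (earlier k) (earlier y).
Proof.
  intros Hky Z [HZ | (k' & Hk'k & HZ)]; [left; exact HZ |].
  exact (stage_earlier k' y Z (lt_trans _ _ _ Hk'k Hky) HZ).
Qed.

Lemma earlier_small y : below_continuum {k | lt k y} -> below_continuum {Z | earlier y Z}.
Proof.
  intros Hy.
  apply (below_continuum_image _ (fun c : option {k | lt k y} * bool * bool =>
    match c with
    | (None, b, b') => if b then packing_part b' else covering_part b'
    | (Some k, b, _) => match stage (proj1_sig k) with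
                        | Some (M, M2) => if b then M else M2
                        | None => empty
                        end
    end)).
  - apply below_continuum_prod_bool, below_continuum_prod_bool, below_continuum_option, Hy.
  - intros Z [(b & [-> | ->]) | (k & Hky & HZ)].
    + exists (None, true, b). reflexivity.
    + exists (None, false, b). reflexivity.
    + destruct (stage k) as [[M M2] |] eqn:E; [| contradiction].
      destruct HZ as [-> | ->]; [exists (Some (exist _ k Hky), true, true)
                                | exists (Some (exist _ k Hky), false, true)];
        simpl; rewrite E; reflexivity.
Qed.

Lemma earlier_witnessed y :
  (forall k, lt k y -> forall M M2, stage k = Some (M, M2) ->
     admissible (earlier k) (fst (task k)) (snd (task k)) M M2) ->
  forall Z, earlier y Z -> witnessed (earlier y) Z.
Proof.
  intros IH Z [HZ | (k & Hky & HZ)].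
  - exact (witnessed_mono _ _ Z (seed_earlier y) (seed_witnessed Z HZ)).
  - destruct (stage k) as [[M M2] |] eqn:E; [| contradiction].
    destruct (IH k Hky M M2 E) as (_ & _ & _ & _ & HwM & HwM2).
    assert (Hsub : subset (fun W => earlier k W \/ W = M \/ W = M2) (earlier y)).
    { intros W [HW | HW]; [exact (earlier_mono k y Hky W HW) |].
      apply (stage_earlier k y W Hky). rewrite E. exact HW. }
    destruct HZ as [-> | ->]; apply (witnessed_mono _ _ _ Hsub); assumption.
Qed.

Lemma stage_spec y :
  (forall M M2, stage y = Some (M, M2) ->
     admissible (earlier y) (fst (task y)) (snd (task y)) M M2) /\
  (stage y = None -> ~ active (earlier y) y).
Proof.
  induction y as [y IH] using (well_founded_ind lt_wf).
  rewrite stage_eq. unfold stage_step. fold (earlier y).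
  destruct (excluded_middle_informative (active (earlier y) y)) as [Hact | Hnact];
    [split; [| discriminate] | split; [discriminate | auto]].
  intros M M2 E. injection E as Ep. destruct Hact as (Hsmall & HIX & Hns).
  pose proof (epsilon_spec (inhabits (empty, empty))
    (fun p => admissible (earlier y) (fst (task y)) (snd (task y)) (fst p) (snd p))) as Hspec.
  rewrite Ep in Hspec. apply Hspec.
  destruct (admissible_exists reaping_large (earlier y) (fst (task y)) (snd (task y))
              (earlier_small y Hsmall)) as (M' & M2' & H).
  - exists (packing_part true). left. exists true. left. reflexivity.
  - apply earlier_witnessed. intros k Hky. exact (proj1 (IH k Hky)).
  - exact HIX.
  - exact Hns.
  - exists (M', M2'). exact H.
Qed.

Definition constructed : pset (pset nat) :=
  fun Z => seed Z \/ exists k, pair_members (stage k) Z.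

Lemma stage_compatible_earlier k Z W : pair_members (stage k) Z -> earlier k W -> compatible Z W.
Proof.
  intros HZ HW. destruct (stage k) as [[M M2] |] eqn:E; [| contradiction].
  destruct (proj1 (stage_spec k) M M2 E) as (_ & _ & Hc & _).
  destruct HZ as [-> | ->]; apply (Hc W HW).
Qed.

Lemma stage_compatible_same k Z W : pair_members (stage k) Z -> pair_members (stage k) W ->
  compatible Z W.
Proof.
  intros HZ HW. destruct (stage k) as [[M M2] |] eqn:E; [| contradiction].
  destruct (proj1 (stage_spec k) M M2 E) as (_ & _ & _ & Hc & _).
  destruct HZ as [-> | ->], HW as [-> | ->];
    auto using compatible_refl, compatible_sym.
Qed.

Lemma constructed_compatible A B : constructed A -> constructed B -> compatible A B.
Proof.
  intros [HA | (k & HA)] [HB | (k' & HB)].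
  - exact (seed_compatible A B HA HB).
  - apply compatible_sym, (stage_compatible_earlier k' B A HB), seed_earlier, HA.
  - apply (stage_compatible_earlier k A B HA), seed_earlier, HB.
  - destruct (lt_trichotomy k k') as [Hkk' | [<- | Hk'k]].
    + apply compatible_sym, (stage_compatible_earlier k' B A HB), (stage_earlier k k' A Hkk' HA).
    + exact (stage_compatible_same k A B HA HB).
    + apply (stage_compatible_earlier k A B HA), (stage_earlier k' k B Hk'k HB).
Qed.

Hypothesis task_onto : forall t, exists y, below_continuum {k | lt k y} /\ task y = t.

Lemma constructed_saturates I X : subset I X -> saturates constructed I X.
Proof.
  intros HIX. destruct (task_onto (I, X)) as (y & Hsmall & Ey).
  destruct (stage y) as [[M M2] |] eqn:E.
  - destruct (proj1 (stage_spec y) M M2 E) as (HIM & HMX & _). rewrite Ey in HIM, HMX.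
    left. exists M. split; [right; exists y; rewrite E; left; reflexivity |].
    split; apply subset_almost_sub; assumption.
  - apply (saturates_mono (earlier y)).
    + intros Z [HZ | (k & _ & HZ)]; [left; exact HZ | right; exists k; exact HZ].
    + apply NNPP. intros Hns. apply (proj2 (stage_spec y) E). unfold active.
      rewrite Ey. auto.
Qed.

End Construction.

Lemma seeded_compatible_family_matroid (F : pset (pset nat)) :
  (forall Z, seed Z -> F Z) -> (forall A B, F A -> F B -> compatible A B) ->
  (forall I X, subset I X -> saturates F I X) ->
  is_matroid (indep F) /\ uniform (indep F) /\
  has_packing (fun _ : bool => indep F) /\ has_covering (fun _ : bool => indep F) /\
  ~ has_partitioning (fun _ : bool => indep F).
Proof.
  intros Fseed Fcompat Fsat.
  assert (Fantichain : forall A B, F A -> F B -> almost_sub A B -> A = B)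
    by (intros A B HA HB; apply compatible_almost_sub, Fcompat; assumption).
  split; [exact (indep_matroid F Fantichain Fsat) |].
  split; [exact (indep_uniform F) |]. split; [| split].
  - apply (indep_has_packing F Fantichain bool packing_part).
    + intros b. apply Fseed. exists b. left. reflexivity.
    + intros [] [] x Hne; try congruence; intros H1 H2;
        [exact (packing_parts_disjoint x H1 H2) | exact (packing_parts_disjoint x H2 H1)].
  - apply (indep_has_covering F bool covering_part).
    + intros b. apply Fseed. exists b. right. reflexivity.
    + intros x. destruct (covering_parts_cover x); eauto.
  - apply (indep_no_partitioning F Fantichain).
    intros A B HA HB. exact (proj2 (Fcompat A B HA HB)).
Qed.

Theorem theorem5p1 :
  reaping_eq_continuum ->
  exists U : pset (pset nat),
    is_matroid U /\ uniform U /\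
    has_packing (fun _ : bool => U) /\
    has_covering (fun _ : bool => U) /\
    ~ has_partitioning (fun _ : bool => U).
Proof.
  intros [_ Hr].
  destruct (exists_strict_well_order (pset nat)) as (lt & Hwf & Htrans & Htri).
  destruct (enumeration_with_small_segments lt _ pset_unpair Hwf pset_unpair_onto)
    as [task Htask].
  exists (indep (constructed lt Hwf task)).
  apply seeded_compatible_family_matroid.
  - intros Z HZ. left. exact HZ.
  - exact (constructed_compatible Hr lt Hwf Htrans Htri task).
  - exact (constructed_saturates Hr lt Hwf Htrans task Htask).
Qed.
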